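(* Let $r\geq1$ be an integer. For $\boldsymbol\nu\in\mathbf N^r$ let $F_{\boldsymbol\nu}(\rho,\boldsymbol T)=\sum_{\boldsymbol n\in\mathbf N^r}\rho^{\min_i(n_i+\nu_i)}\prod_iT_i^{n_i}\in\mathbf Z[[\rho,T_1,\dots,T_r]]$ and $\widetilde F_{\boldsymbol\nu}(\rho,\boldsymbol T)=(1-\rho\prod_iT_i)\prod_i(1-T_i)\,F_{\boldsymbol\nu}(\rho,\boldsymbol T)$. Then: (1) Let $\boldsymbol n\in\mathbf N^r$, $m=\min_i(n_i+\nu_i)$, $I_1=\{i:n_i\geq1\}$, $I_2=\{i:n_i\geq2\}$, $K=\{i\in I_1:n_i+\nu_i\geq m+1\}$. If $I_1\neq\{1,\dots,r\}$, the coefficient of $\prod T_i^{n_i}$ in $\widetilde F_{\boldsymbol\nu}$ equals $\rho^m$ if $I_1=\varnothing$; $\rho^m-\rho^{m-1}$ if $I_1\neq\varnothing$ and $K=\varnothing$; $0$ if $K\neq\varnothing$. If $I_1=\{1,\dots,r\}$, it equals $0$ if $I_2\cap K\neq\varnothing$; $-\rho^m$ if $I_2=\varnothing$ and $K\neq\varnothing$; $0$ if $I_2\neq\varnothing$ and $K=\varnothing$; $\rho^{m-1}-\rho^m$ if $I_2\neq\varnothing$, $K\neq\varnothing$ and $I_2\cap K=\varnothing$; $-\rho^{m-1}$ if $I_2=K=\varnothing$. In particular $\widetilde F_{(0,\dots,0)}(\rho,\boldsymbol T)=1-\prod_iT_i$. (2) $\widetilde F_{\boldsymbol\nu}(\rho,\boldsymbol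 T)$ is a polynomial whose partial degree in each $T_i$ is at most $\max_j\nu_j+1$. (3) Let $\rho\geq1$, $\varepsilon>0$ and $\eta_1,\dots,\eta_r$ complex numbers of modulus $1$. Then for every $\boldsymbol\nu$, $$\big|\widetilde F_{\boldsymbol\nu}\big(\rho,(\eta_i\rho^{-1})_i\big)\big|\leq\big(2+\max_i\nu_i-\min_i\nu_i\big)^r\rho^{\min_i\nu_i}.$$ *)

(* Multivariate formal power series in T_1..T_r with
   coefficients in Z[rho] = {poly int} (rho is the polynomial variable 'X). *)
From mathcomp Require Import all_boot all_order all_algebra.
Set Implicit Arguments. Unset Strict Implicit. Unset Printing Implicit Defensive.
Import Order.TTheory GRing.Theory Num.Theory.
Local Open Scope ring_scope.

Section Series.
Variable r : nat.

Definition midx := 'I_r -> nat.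

Definition mps := midx -> {poly int}.

(* minimum of a family of naturals over 'I_r (the true minimum when r >= 1) *)
Definition nmin (f : 'I_r -> nat) : nat :=
  \big[minn/(\max_(i < r) f i)%N]_(i < r) f i.
Definition nmax (f : 'I_r -> nat) : nat := (\max_(i < r) f i)%N.

(* Cauchy product: (f*g)_n = sum_{m <= n} f_m g_{n-m} ; m ranges over
   multi-indices bounded coordinatewise by n *)
Definition mps_mul (f g : mps) : mps := fun n =>
  \sum_(m : {ffun 'I_r -> 'I_(nmax n).+1} | [forall i, (m i <= n i)%N])
     f (fun i => nat_of_ord (m i)) * g (fun i => (n i - m i)%N).
Definition mps_add (f g : mps) : mps := fun n => f n + g n.
Definition mps_opp (f : mps) : mps := fun n => - f n.
Definition mps_sub (f g : mps) : mps := mps_add f (mps_opp g).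
Definition mps_const (c : {poly int}) : mps :=
  fun n => if [forall i, n i == 0%N] then c else 0.
Definition mps_one : mps := mps_const 1.
Definition mps_rho : mps := mps_const 'X.
Definition mps_T (i : 'I_r) : mps :=
  fun n => if [forall j, n j == (j == i : nat)] then 1 else 0.

Definition F (nu : midx) : mps := fun n => 'X^(nmin (fun i => n i + nu i)).

Definition Ft (nu : midx) : mps :=
  mps_mul (mps_sub mps_one (mps_mul mps_rho (\big[mps_mul/mps_one]_(i < r) mps_T i)))
    (mps_mul (\big[mps_mul/mps_one]_(i < r) mps_sub mps_one (mps_T i)) (F nu)).

Definition one_minus_prodT : mps :=
  mps_sub mps_one (\big[mps_mul/mps_one]_(i < r) mps_T i).

Definition coef_formula (nu n : midx) : {poly int} :=
  let m := nmin (fun i => n i + nu i) in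
  let inI1 i := (1 <= n i)%N in
  let inI2 i := (2 <= n i)%N in
  let inK i := inI1 i && (m.+1 <= n i + nu i)%N in
  let I1_empty := [forall i, ~~ inI1 i] in
  let I1_full := [forall i, inI1 i] in
  let I2_empty := [forall i, ~~ inI2 i] in
  let K_empty := [forall i, ~~ inK i] in
  let I2K_empty := [forall i, ~~ (inI2 i && inK i)] in
  if ~~ I1_full then
    (if I1_empty then 'X^m
     else if K_empty then 'X^m - 'X^(m - 1)
     else 0)
  else
    (if ~~ I2K_empty then 0
     else if I2_empty && ~~ K_empty then - 'X^m
     else if ~~ I2_empty && K_empty then 0
     else if ~~ I2_empty && ~~ K_empty && I2K_empty then 'X^(m - 1) - 'X^m
     else (* I2 = K = empty *) - 'X^(m - 1)).

(* evaluation of a series whose support lies in the box [0,B]^r at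
   T_i := t i, rho := x, in a ring C *)
Definition mps_eval_box (C : comNzRingType) (B : nat) (f : mps) (x : C)
    (t : 'I_r -> C) : C :=
  \sum_(m : {ffun 'I_r -> 'I_B.+1})
     (map_poly (fun z : int => z%:~R) (f (fun i => nat_of_ord (m i)))).[x]
       * \prod_(i < r) t i ^+ m i.

End Series.

(* Multiplying F_nu by prod_i (1 - T_i) turns the coefficient of T^n into an
   inclusion-exclusion sum over the sets S of coordinates of n lowered by one.
   This lowers m = min_i (n_i + nu_i) by one when S meets a coordinate attaining
   the minimum and leaves it unchanged when S is contained in K, so the sum
   collapses to [K empty] (rho^m - rho^(m-1)) + [I1 empty] rho^(m-1).
   Multiplying by 1 - rho prod_i T_i subtracts rho times the same expression at
   n - (1,...,1), and sorting out the cases gives (1).  Every case of (1)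
   vanishes as soon as some n_i >= 2 + max nu - min nu, which gives (2).
   Finally each coefficient has modulus at most rho^m <= rho^(min nu + sum_i n_i),
   so at T_i = eta_i / rho every monomial contributes at most rho^(min nu), and
   by the same vanishing at most (2 + max nu - min nu)^r monomials survive. *)

From HB Require Import structures.
From mathcomp Require Import all_boot all_order all_algebra.
From Stdlib Require Import FunctionalExtensionality.
From mathcomp Require Import zify ring.
Set Implicit Arguments. Unset Strict Implicit. Unset Printing Implicit Defensive.
Import Order.TTheory GRing.Theory Num.Theory.
Local Open Scope ring_scope.

HB.instance Definition _ := SemiGroup.isComLaw.Build nat minn minnA minnC.

Lemma prodr_boolE (R : comNzRingType) (I : finType) (P : pred I) :
  \prod_(i : I) (P i)%:R = [forall i, P i]%:R :> R.
Proof.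
have [hP|/forallPn [i /negbTE Pi]] := boolP [forall i, P i].
  by rewrite big1 // => i _; rewrite (forallP hP).
by rewrite (bigD1 i) //= Pi mul0r.
Qed.

Lemma sum_ord_leq K D : (\sum_(t < K) (t <= D) = minn K D.+1)%N.
Proof.
elim: K => [|K IH]; first by rewrite big_ord0 min0n.
by rewrite big_ord_recr /= IH; case: leqP => hKD; lia.
Qed.

Section Nmin.
Variable r : nat.
Implicit Types f : 'I_r -> nat.

Lemma leq_nmax f i : (f i <= nmax f)%N.
Proof. exact: leq_bigmax. Qed.

Lemma nmin_leq f i : (nmin f <= f i)%N.
Proof. by rewrite /nmin (bigD1 i) //= geq_minl. Qed.

Hypothesis r_gt0 : (0 < r)%N.

Lemma nmin_geq f v : (forall i, v <= f i)%N -> (v <= nmin f)%N.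
Proof.
move=> hv; apply: (big_ind (fun x => v <= x)%N) => [|x y hx hy|i _].
- exact: leq_trans (hv (Ordinal r_gt0)) (leq_nmax f _).
- by rewrite leq_min hx.
- exact: hv.
Qed.

Lemma nmin_eq f v : (forall i, v <= f i)%N -> (exists i, f i = v) -> nmin f = v.
Proof.
by move=> hv [i fiv]; apply/eqP; rewrite eqn_leq -{1}fiv nmin_leq nmin_geq.
Qed.

Lemma nmin_attained f : exists i, nmin f = f i.
Proof.
have [i _ hi] := @arg_minnP _ (Ordinal r_gt0) xpredT f isT.
by exists i; apply: nmin_eq => [j|]; [exact: hi | exists i].
Qed.

End Nmin.

Local Notation mmin nu n := (nmin (fun i => (n i + nu i)%N)).
Local Notation inK nu n i := ((0 < n i) && ((nmin (fun j => n j + nu j)).+1 <= n i + nu i))%N.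

Local Notation ev rho p := (map_poly (fun z : int => z%:~R) p).[rho].

Section Series.
Variable r : nat.
Implicit Types (a n : midx r) (f g : mps r) (c : {poly int}).

Definition mps_mono a c : mps r :=
  fun m => if [forall i, m i == a i] then c else 0.

Lemma mps_mul_monoL a c g n :
  mps_mul (mps_mono a c) g n =
  if [forall i, a i <= n i]%N then c * g (fun i => n i - a i)%N else 0.
Proof.
rewrite /mps_mul /mps_mono; case: ifP => [/forallP han | /forallPn [i hi]].
- pose a' : {ffun 'I_r -> 'I_(nmax n).+1} := [ffun i => inord (a i)].
  have a'E i : (a' i : nat) = a i.
    by rewrite ffunE inordK // ltnS (leq_trans (han i)) ?leq_nmax.
  rewrite (bigD1 a') /=; last by apply/forallP => i; rewrite a'E.
  rewrite big1 => [|m /andP [_ /eqP m_neq]]; last first.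
    case: ifP => [/forallP hm|_]; last by rewrite mul0r.
    by case: m_neq; apply/ffunP => i; apply: val_inj; rewrite /= a'E; apply/eqP.
  have -> : [forall i, (a' i : nat) == a i] by apply/forallP => i; rewrite a'E.
  by rewrite addr0; congr (_ * g _); apply: functional_extensionality => i; rewrite a'E.
- rewrite big1 // => m /forallP hm; case: ifP => [/forallP ham|_]; last by rewrite mul0r.
  by move: hi; rewrite -(eqP (ham i)) hm.
Qed.

Lemma mps_mul_constL c g : mps_mul (mps_mono (fun _ => 0%N) c) g = fun n => c * g n.
Proof.
apply: functional_extensionality => n; rewrite mps_mul_monoL.
have -> : [forall i, 0 <= n i]%N by apply/forallP.
by congr (_ * g _); apply: functional_extensionality => i; rewrite subn0.
Qed.

Lemma mps_mul_mono a b c d :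
  mps_mul (mps_mono a c) (mps_mono b d) = mps_mono (fun i => a i + b i)%N (c * d).
Proof.
apply: functional_extensionality => n; rewrite mps_mul_monoL /mps_mono.
case: ifP => [/forallP han | /forallPn [i hi]].
  have -> : [forall i, n i - a i == b i]%N = [forall i, n i == a i + b i]%N.
    by apply: eq_forallb => i; have := han i; lia.
  by case: ifP; rewrite ?mulr0.
case: ifP => // /forallP /(_ i) /eqP ni.
by rewrite ni leq_addr in hi.
Qed.

Lemma mps_mulDl f1 f2 g n :
  mps_mul (mps_add f1 f2) g n = mps_mul f1 g n + mps_mul f2 g n.
Proof. by rewrite /mps_mul -big_split; apply: eq_bigr => m _; rewrite mulrDl. Qed.

Lemma mps_1Bmono a c :
  mps_sub (@mps_one r) (mps_mono a c) =
  mps_add (mps_mono (fun _ => 0%N) 1) (mps_mono a (- c)).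
Proof.
apply: functional_extensionality => m.
by rewrite /mps_sub /mps_add /mps_opp /mps_mono; case: ifP; rewrite ?oppr0.
Qed.

Lemma prod_mps_T_seq (s : seq 'I_r) : uniq s ->
  \big[@mps_mul r/@mps_one r]_(i <- s) mps_T i = mps_mono (fun j => (j \in s : nat)) 1.
Proof.
elim: s => [_|x s IH /andP [xs us]].
  rewrite big_nil; apply: functional_extensionality => n.
  by rewrite /mps_one /mps_const /mps_mono; congr (if _ then _ else _);
    apply: eq_forallb => j; rewrite in_nil.
rewrite big_cons IH // [mps_T x]/mps_T -/(mps_mono _ _) mps_mul_mono mulr1.
congr mps_mono; apply: functional_extensionality => j.
by rewrite in_cons; case: eqP => [->|] //=; rewrite (negbTE xs).
Qed.

Lemma prod_mps_T :
  \big[@mps_mul r/@mps_one r]_(i < r) mps_T i = mps_mono (fun _ => 1%N) 1.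
Proof.
rewrite prod_mps_T_seq ?index_enum_uniq //; congr mps_mono.
by apply: functional_extensionality => j; rewrite mem_index_enum.
Qed.

Lemma one_minus_rho_prodT :
  mps_sub (@mps_one r)
    (mps_mul (@mps_rho r) (\big[@mps_mul r/@mps_one r]_(i < r) mps_T i)) =
  mps_add (mps_mono (fun _ => 0%N) 1) (mps_mono (fun _ => 1%N) (- 'X)).
Proof.
by rewrite prod_mps_T [@mps_rho r]/mps_rho -/(mps_mono _ _) mps_mul_mono mulr1 mps_1Bmono.
Qed.

Lemma one_minus_prodTE n :
  one_minus_prodT n = [forall i, n i == 0%N]%:R - [forall i, n i == 1%N]%:R.
Proof.
rewrite /one_minus_prodT prod_mps_T mps_1Bmono /mps_add /mps_mono /=.
by do 2 case: ifP => _; rewrite /=; ring.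
Qed.

Lemma sum_box_prod (R : comNzRingType) N n (a : 'I_r -> nat -> R) :
  (forall i, n i <= N)%N ->
  \sum_(m : {ffun 'I_r -> 'I_N.+1} | [forall i, m i <= n i]%N) \prod_i a i (m i) =
  \prod_i \sum_(t < (n i).+1) a i t.
Proof.
move=> nN; rewrite big_mkcond /=.
rewrite (eq_bigr (fun m : {ffun 'I_r -> 'I_N.+1} =>
                    \prod_i ((m i <= n i)%N%:R * a i (m i)))); last first.
  move=> m _; rewrite big_split /= prodr_boolE.
  by case: ifP => _; rewrite /= ?mulr1n ?mul1r ?mulr0n ?mul0r.
rewrite -(bigA_distr_bigA (fun i (t : 'I_N.+1) => (t <= n i)%N%:R * a i t)).
apply: eq_bigr => i _; rewrite (big_ord_widen N.+1 (a i)) ?ltnS // [RHS]big_mkcond /=.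
by apply: eq_bigr => t _; rewrite ltnS; case: leqP; rewrite ?mulr1n ?mul1r ?mulr0n ?mul0r.
Qed.

Definition coef1BT (t : nat) : {poly int} :=
  if t == 0%N then 1 else if t == 1%N then -1 else 0.

Lemma coef1BT_eq0 t : (1 < t)%N -> coef1BT t = 0.
Proof. by case: t => [|[|t]]. Qed.

Lemma coef1BT_gt0 t : (0 < t)%N -> coef1BT t = - (t == 1%N)%:R.
Proof. by case: t => [|[|t]] //; rewrite oppr0. Qed.

Lemma sum_coef1BTM k (w : nat -> {poly int}) :
  \sum_(t < k.+1) coef1BT t * w t = if k == 0%N then w 0%N else w 0%N - w 1%N.
Proof.
rewrite big_ord_recl /= mul1r; case: k => [|k]; first by rewrite big_ord0 addr0.
rewrite big_ord_recl big1 => [|t _]; last by rewrite coef1BT_eq0 ?mul0r.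
by rewrite addr0 /= mulN1r.
Qed.

Lemma sum_coef1BT k : \sum_(t < k.+1) coef1BT t = (k == 0%N)%:R.
Proof.
under eq_bigr do rewrite -[coef1BT _]mulr1.
by rewrite (sum_coef1BTM k (fun _ => 1)); case: eqP; rewrite ?subrr.
Qed.

Lemma mps_mul_1BT x g n :
  mps_mul (mps_sub (@mps_one r) (mps_T x)) g n =
  g n - (if (0 < n x)%N then g (fun i => n i - (i == x))%N else 0).
Proof.
rewrite [mps_T x]/mps_T -/(mps_mono _ _) mps_1Bmono mps_mulDl mps_mul_constL.
rewrite mps_mul_monoL mul1r; case: ifP => [/forallP h | /forallPn [i /=]].
  by have := h x; rewrite eqxx => ->; rewrite mulN1r.
move=> h; have ix : i = x by apply/eqP; apply: contraNT h => /negbTE ->.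
move: h; rewrite ix eqxx /= -ltnNge ltnS leqn0 => /eqP nx0.
by rewrite nx0 /= addr0 subr0.
Qed.

Lemma prod_1BT_seq (s : seq 'I_r) : uniq s ->
  \big[@mps_mul r/@mps_one r]_(i <- s) mps_sub (@mps_one r) (mps_T i) =
  fun m => \prod_j (if j \in s then coef1BT (m j) else (m j == 0%N)%:R).
Proof.
elim: s => [_|x s IH /andP [xs us]].
  rewrite big_nil; apply: functional_extensionality => m.
  rewrite (eq_bigr (fun j => (m j == 0%N)%:R)) // prodr_boolE /mps_one /mps_const.
  by case: ifP.
apply: functional_extensionality => n; rewrite big_cons mps_mul_1BT IH //.
set w := fun (s' : seq 'I_r) j t => if j \in s' then coef1BT t else (t == 0%N)%:R.
have others m : (forall j, j != x -> m j = n j) ->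
    \prod_(j | j != x) w s j (m j) = \prod_(j | j != x) w (x :: s) j (n j).
  by move=> mn; apply: eq_bigr => j jx; rewrite /w mn // in_cons (negbTE jx).
rewrite -/(w s _ _) (bigD1 x) //= others // [RHS](bigD1 x) //= /w in_cons eqxx.
rewrite (negbTE xs) /=; have [nx0 | nx_gt0] := posnP (n x); first by rewrite nx0 subr0.
rewrite mul0r sub0r (bigD1 x) //= (negbTE xs) eqxx others => [|j /negbTE jx]; last first.
  by rewrite jx subn0.
rewrite coef1BT_gt0 // mulNr.
by have -> : (n x - 1 == 0)%N = (n x == 1)%N by lia.
Qed.

Lemma prod_1BT :
  \big[@mps_mul r/@mps_one r]_(i < r) mps_sub (@mps_one r) (mps_T i) =
  fun m => \prod_j coef1BT (m j).
Proof.
rewrite prod_1BT_seq ?index_enum_uniq //; apply: functional_extensionality => m.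
by apply: eq_bigr => j _; rewrite mem_index_enum.
Qed.

Lemma coef_formula_eq0 nu n i :
  (2 + nmax nu - nmin nu <= n i)%N -> coef_formula nu n = 0.
Proof.
move=> ni_big; rewrite /coef_formula /=.
have hle j : (mmin nu n <= n j + nu j)%N := nmin_leq _ j.
have nu_max j := leq_nmax nu j.
have ni_big' : (nmax nu + 2 <= n i + nu i)%N by have := nmin_leq nu i; lia.
have ni_gt1 : (1 < n i)%N by have := nu_max i; lia.
case: (boolP [forall j, 0 < n j]%N) => [/forallP n_gt0 | /forallPn [j nj]] /=.
  case: (boolP [forall j, ~~ ((1 < n j)%N && inK nu n j)]) => // /forallP I2K_empty.
  have m_big : (nmax nu + 2 <= mmin nu n)%N.
    by have := I2K_empty i; have := hle i; lia.
  have -> : [forall j, ~~ (1 < n j)%N] = false by apply/negbTE/forallPn; exists i; lia.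
  have -> : [forall j, ~~ inK nu n j].
    apply/forallP => k; have := I2K_empty k; have := hle k; have := nu_max k.
    by have := n_gt0 k; lia.
  by [].
have -> : [forall j, ~~ (0 < n j)%N] = false by apply/negbTE/forallPn; exists i; lia.
have -> : [forall j, ~~ inK nu n j] = false.
  by apply/negbTE/forallPn; exists i; have := hle j; have := nu_max j; lia.
by [].
Qed.

Lemma coef_formula_bound (C : numClosedFieldType) (rho : C) nu n :
  1 <= rho -> `|ev rho (coef_formula nu n)| <= rho ^+ mmin nu n.
Proof.
move=> rho_ge1; have rho_ge0 : 0 <= rho := le_trans ler01 rho_ge1.
rewrite /coef_formula /=; set m := nmin _.
have h0 : `|rho ^+ m| <= rho ^+ m by rewrite ger0_norm ?exprn_ge0.
have h1 : rho ^+ (m - 1) <= rho ^+ m by rewrite ler_weXn2l // leq_subr.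
have h2 : `|rho ^+ m - rho ^+ (m - 1)| <= rho ^+ m.
  by rewrite ger0_norm ?subr_ge0 // gerBl exprn_ge0.
have h3 : `|rho ^+ (m - 1)| <= rho ^+ m by rewrite ger0_norm ?exprn_ge0.
have ev0 : ev rho 0 = 0 by rewrite rmorph0 horner0.
have evN p : ev rho (- p) = - ev rho p by rewrite rmorphN hornerN.
have evB p q : ev rho (p - q) = ev rho p - ev rho q.
  by rewrite rmorphB hornerD hornerN.
have evX k : ev rho 'X^k = rho ^+ k by rewrite map_polyXn hornerXn.
repeat case: ifP => _; rewrite ?evB ?evN ?ev0 ?evX ?normrN ?normr0 ?exprn_ge0 //.
by rewrite distrC.
Qed.

End Series.

Section Ftilde.
Variable r : nat.
Hypothesis r_gt0 : (0 < r)%N.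
Implicit Types (nu n : midx r).

Lemma mmin_sub01 nu n (m : midx r) :
  (forall j, m j <= 1)%N -> (forall j, m j <= n j)%N ->
  nmin (fun j => n j - m j + nu j)%N =
  if [forall j, (m j == 1%N) ==> (mmin nu n < n j + nu j)%N]
  then mmin nu n else (mmin nu n - 1)%N.
Proof.
move=> m01 mn; have hle i : (mmin nu n <= n i + nu i)%N := nmin_leq _ i.
case: ifP => [/forallP hK | /negbT /forallPn [j]].
  apply: (nmin_eq r_gt0) => [i|].
    have := hK i; have := hle i; have := m01 i; have := mn i.
    by case: (m i) => [|[|k]] /=; lia.
  have [j0 hj0] := nmin_attained r_gt0 (fun i => n i + nu i).
  exists j0; have := hK j0; have := m01 j0; rewrite /= in hj0; rewrite hj0.
  by case: (m j0) => [|[|k]] /=; lia.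
rewrite negb_imply -leqNgt => /andP [/eqP mj1 hj]; apply: (nmin_eq r_gt0) => [i|].
  by have := hle i; have := m01 i; have := mn i; lia.
by exists j; have := hle j; have := mn j; rewrite mj1; lia.
Qed.

Lemma QF_term nu n (m : midx r) : (forall j, m j <= n j)%N ->
  \prod_j coef1BT (m j) * 'X^(nmin (fun j => n j - m j + nu j)%N) =
  \prod_j coef1BT (m j) * 'X^(mmin nu n - 1)
  + \prod_j (coef1BT (m j) * ((m j == 1%N) ==> (mmin nu n < n j + nu j))%N%:R)
    * ('X^(mmin nu n) - 'X^(mmin nu n - 1)).
Proof.
move=> mn; rewrite big_split /= prodr_boolE.
have [m01|/forallPn [j hj]] := boolP [forall j, m j <= 1]%N; last first.
  have -> : \prod_j coef1BT (m j) = 0.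
    by rewrite (bigD1 j) //= coef1BT_eq0 ?mul0r // ltnNge.
  by rewrite !mul0r addr0.
rewrite (mmin_sub01 nu (forallP m01) mn) -mulrA -mulrDr; congr (_ * _).
by case: ifP => _; rewrite /= ?mulr1n ?mulr0n ?mul1r ?mul0r ?addr0 // addrC subrK.
Qed.

Definition QF_coef nu n : {poly int} :=
  [forall i, ~~ inK nu n i]%:R * ('X^(mmin nu n) - 'X^(mmin nu n - 1))
  + [forall i, ~~ (0 < n i)%N]%:R * 'X^(mmin nu n - 1).

Lemma QF_coefE nu n :
  mps_mul (\big[@mps_mul r/@mps_one r]_(i < r) mps_sub (@mps_one r) (mps_T i))
    (F nu) n = QF_coef nu n.
Proof.
rewrite prod_1BT /mps_mul /F.
under eq_bigr => m /forallP mn do rewrite QF_term //.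
rewrite big_split /= -!mulr_suml (sum_box_prod (fun _ => coef1BT) (leq_nmax n)).
rewrite (sum_box_prod (fun j t => coef1BT t * ((t == 1%N) ==> (mmin nu n < n j + nu j))%N%:R)
                      (leq_nmax n)).
under eq_bigr do rewrite sum_coef1BT.
under [X in _ + X * _]eq_bigr => j _ do
  rewrite (sum_coef1BTM _ (fun t => ((t == 1%N) ==> (mmin nu n < n j + nu j))%N%:R)).
rewrite /QF_coef addrC -!prodr_boolE; congr (_ * _ + _ * _); apply: eq_bigr => i _.
  by case: (n i) => [|k] //=; case: (_ < _)%N; rewrite /= ?subrr ?subr0.
by case: (n i).
Qed.

Lemma FtE nu n :
  Ft nu n = QF_coef nu n -
    (if [forall i, 0 < n i]%N then 'X * QF_coef nu (fun i => n i - 1)%N else 0).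
Proof.
rewrite /Ft one_minus_rho_prodT mps_mulDl mps_mul_constL mps_mul_monoL /= mul1r.
by rewrite !QF_coefE; case: ifP => _; rewrite ?mulNr ?subr0 ?addr0.
Qed.

Lemma QF_coef_shift nu n : (forall i, 0 < n i)%N ->
  QF_coef nu (fun i => n i - 1)%N =
  [forall i, ~~ ((1 < n i)%N && inK nu n i)]%:R
    * ('X^(mmin nu n - 1) - 'X^(mmin nu n - 1 - 1))
  + [forall i, ~~ (1 < n i)%N]%:R * 'X^(mmin nu n - 1 - 1).
Proof.
move=> n_gt0; rewrite /QF_coef.
have hle i : (mmin nu n <= n i + nu i)%N := nmin_leq _ i.
have [j0 hj0] := nmin_attained r_gt0 (fun i => n i + nu i).
rewrite /= in hj0; have m_gt0 : (0 < mmin nu n)%N by rewrite hj0 addn_gt0 n_gt0.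
have -> : mmin nu (fun i => n i - 1)%N = (mmin nu n - 1)%N.
  apply: (nmin_eq r_gt0) => [i|]; first by have := hle i; have := n_gt0 i; lia.
  by exists j0; rewrite hj0; have := n_gt0 j0; lia.
have -> : [forall i, ~~ (0 < n i - 1)%N] = [forall i, ~~ (1 < n i)%N].
  by apply: eq_forallb => i; have := n_gt0 i; lia.
have -> : [forall i, ~~ ((0 < n i - 1)%N && ((mmin nu n - 1).+1 <= n i - 1 + nu i)%N)]
        = [forall i, ~~ ((1 < n i)%N && inK nu n i)].
  by apply: eq_forallb => i; have := n_gt0 i; lia.
by [].
Qed.

Lemma Ft_coef nu n : Ft nu n = coef_formula nu n.
Proof.
rewrite FtE /coef_formula /=.
have hle i : (mmin nu n <= n i + nu i)%N := nmin_leq _ i.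
have XmX k : (0 < k)%N -> 'X^k = 'X * 'X^(k - 1) :> {poly int}.
  by move=> k_gt0; rewrite -exprS subn1 prednK.
have [j0 hj0] := nmin_attained r_gt0 (fun i => n i + nu i).
case: (boolP [forall i, 0 < n i]%N) => [n_gt0 | _] /=; last first.
  rewrite subr0 /QF_coef.
  case: (boolP [forall i, ~~ (0 < n i)%N]) => [I1_empty | _] /=.
    have -> : [forall i, ~~ inK nu n i].
      by apply/forallP => i; rewrite (negbTE (forallP I1_empty i)).
    by rewrite /=; ring.
  by case: (boolP [forall i, ~~ inK nu n i]) => _ /=; ring.
rewrite QF_coef_shift; last exact/forallP.
rewrite /QF_coef.
have -> : [forall i, ~~ (0 < n i)%N] = false.
  by apply/negbTE/forallPn; exists j0; rewrite negbK (forallP n_gt0).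
rewrite /= in hj0.
have m_gt0 : (0 < mmin nu n)%N by rewrite hj0 addn_gt0 (forallP n_gt0).
rewrite (XmX _ m_gt0).
case: (boolP [forall i, ~~ ((1 < n i)%N && inK nu n i)]) => I2K_empty /=; last first.
  have -> : [forall i, ~~ inK nu n i] = false.
    apply/negbTE; apply: contra I2K_empty => /forallP h.
    by apply/forallP => i; rewrite (negbTE (h i)) andbF.
  have -> : [forall i, ~~ (1 < n i)%N] = false.
    apply/negbTE; apply: contra I2K_empty => /forallP h.
    by apply/forallP => i; rewrite (negbTE (h i)).
  by rewrite /=; ring.
case: (boolP [forall i, ~~ (1 < n i)%N]) => [_ | /forallPn [i /negPn ni_gt1]] /=.
  by case: (boolP [forall i, ~~ inK nu n i]) => _ /=; ring.
have m_gt1 : (1 < mmin nu n)%N.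
  have := forallP I2K_empty i; rewrite ni_gt1 /=.
  by have := hle i; have := forallP n_gt0 i; lia.
rewrite (XmX (mmin nu n - 1)%N); last by lia.
by case: (boolP [forall i, ~~ inK nu n i]) => _ /=; ring.
Qed.

Lemma Ft_nu0 n : Ft (fun _ => 0%N) n = one_minus_prodT n.
Proof.
rewrite Ft_coef one_minus_prodTE /coef_formula /=.
set m := nmin _.
have hle i : (m <= n i + 0)%N := nmin_leq _ i.
have [j0 hj0] : exists j, m = (n j + 0)%N := nmin_attained r_gt0 _.
case: (boolP [forall i, 0 < n i]%N) => [/forallP n_gt0 | /forallPn [j nj]] /=; last first.
  have m0 : m = 0%N by have := hle j; lia.
  have -> : [forall i, n i == 1%N] = false by apply/negbTE/forallPn; exists j; lia.
  have -> : [forall i, ~~ (0 < n i)%N] = [forall i, n i == 0%N].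
    by apply: eq_forallb => i; lia.
  case: ifP => [_ | /negbT /forallPn [i ni]]; first by rewrite m0 /= expr0 subr0.
  have -> : [forall i, ~~ ((0 < n i)%N && (m < n i + 0)%N)] = false.
    by apply/negbTE/forallPn; exists i; rewrite m0; lia.
  by rewrite /= subrr.
have -> : [forall i, n i == 0%N] = false.
  by apply/negbTE/forallPn; exists j0; have := n_gt0 j0; lia.
case: (boolP [forall i, ~~ ((1 < n i)%N && ((0 < n i)%N && (m < n i + 0)%N))])
  => I2K_empty /=; last first.
  have -> : [forall i, n i == 1%N] = false.
    apply/negbTE; apply: contra I2K_empty => /forallP n1.
    by apply/forallP => i; rewrite (eqP (n1 i)).
  by rewrite subrr.
case: (boolP [forall i, ~~ (1 < n i)%N])
  => [/forallP I2_empty | /forallPn [i /negPn ni_gt1]] /=.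
  have n1 i : n i = 1%N by have := I2_empty i; have := n_gt0 i; lia.
  have m1 : m = 1%N by rewrite hj0 n1.
  have -> : [forall i, n i == 1%N] by apply/forallP => i; rewrite n1.
  have -> : [forall i, ~~ ((0 < n i)%N && (m < n i + 0)%N)].
    by apply/forallP => i; rewrite n1 m1.
  by rewrite /= m1 subnn expr0 sub0r.
have -> : [forall i, n i == 1%N] = false by apply/negbTE/forallPn; exists i; lia.
have -> : [forall i, ~~ ((0 < n i)%N && (m < n i + 0)%N)].
  apply/forallP => k; have := forallP I2K_empty k; have := hle j0; have := n_gt0 j0.
  by rewrite -hj0; lia.
by rewrite /= subrr.
Qed.

Section Bound.
Variables (C : numClosedFieldType) (rho : C).
Hypothesis rho_ge1 : 1 <= rho.

Lemma Ft_eval_term_bound eta nu (m : midx r) :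
  (forall i, `|eta i| = 1) ->
  `|ev rho (Ft nu m) * \prod_i (eta i / rho) ^+ m i|
    <= [forall i, m i <= 1 + nmax nu - nmin nu]%N%:R * rho ^+ nmin nu.
Proof.
move=> eta1; have rho_gt0 : 0 < rho := lt_le_trans ltr01 rho_ge1.
rewrite Ft_coef; case: (boolP [forall i, _]) => [_ | /forallPn [i mi_big]] /=; last first.
  rewrite (coef_formula_eq0 (i := i)); last by lia.
  by rewrite rmorph0 horner0 mul0r normr0 mulr0n mul0r.
rewrite mulr1n mul1r normrM normr_prod.
have -> : \prod_i `|(eta i / rho) ^+ m i| = rho^-1 ^+ (\sum_i m i)%N.
  rewrite -prodrXr; apply: eq_bigr => i _.
  by rewrite normrX normf_div eta1 ger0_norm ?div1r // ltW.
have [j0 hj0] := nmin_attained r_gt0 nu.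
have m_le : (mmin nu m <= nmin nu + \sum_i m i)%N.
  have : (mmin nu m <= m j0 + nu j0)%N := nmin_leq _ j0.
  have : (m j0 <= \sum_i m i)%N by rewrite (bigD1 j0) //= leq_addr.
  lia.
have rhoV_ge0 : 0 <= rho^-1 ^+ (\sum_i m i)%N by rewrite exprn_ge0 // invr_ge0 ltW.
apply: le_trans (ler_wpM2r rhoV_ge0 (coef_formula_bound nu m rho_ge1)) _.
apply: le_trans (ler_wpM2r rhoV_ge0 (ler_weXn2l rho_ge1 m_le)) _.
by rewrite exprD -mulrA -exprMn mulfV ?gt_eqF // expr1n mulr1.
Qed.

Lemma Ft_eval_bound eta nu B :
  (forall i, `|eta i| = 1) ->
  `|mps_eval_box B (Ft nu) rho (fun i => eta i / rho)|
    <= (2 + nmax nu - nmin nu)%N%:R ^+ r * rho ^+ nmin nu.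
Proof.
move=> eta1; rewrite /mps_eval_box.
apply: le_trans (ler_norm_sum _ _ _) _.
apply: le_trans.
  by apply: ler_sum => m _; exact: (Ft_eval_term_bound nu (fun i => m i) eta1).
rewrite -mulr_suml ler_wpM2r ?exprn_ge0 ?(le_trans ler01 rho_ge1) //.
under eq_bigr do rewrite -prodr_boolE.
rewrite -(bigA_distr_bigA (fun i (t : 'I_B.+1) => (t <= 1 + nmax nu - nmin nu)%N%:R)).
have -> : (2 + nmax nu - nmin nu)%N%:R ^+ r
          = \prod_(i < r) (2 + nmax nu - nmin nu)%N%:R :> C.
  by rewrite prodr_const card_ord.
apply: ler_prod => i _.
have i0 := Ordinal r_gt0; have := leq_trans (nmin_leq nu i0) (leq_nmax nu i0).
by rewrite -natr_sum sum_ord_leq ler0n ler_nat /=; lia.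
Qed.

End Bound.
End Ftilde.

Theorem proposition3p2 (r : nat) (hr : (1 <= r)%N) :
  (forall (nu n : midx r), Ft nu n = coef_formula nu n)
  /\ (forall n : midx r, Ft (fun _ => 0%N) n = @one_minus_prodT r n)
  /\ (forall (nu n : midx r) (i : 'I_r), ((nmax nu).+1 < n i)%N -> Ft nu n = 0)
  /\ (forall (C : numClosedFieldType) (rho eps : C) (eta : 'I_r -> C),
        1 <= rho -> 0 < eps -> (forall i, `|eta i| = 1) ->
        forall (nu : midx r) (B : nat),
          (forall (n : midx r) (i : 'I_r), (B < n i)%N -> Ft nu n = 0) ->
          `| mps_eval_box B (Ft nu) rho (fun i => eta i / rho) |
            <= (2 + nmax nu - nmin nu)%N%:R ^+ r * rho ^+ nmin nu).
Proof.
split; first exact: Ft_coef.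
split; first exact: Ft_nu0.
split; first by move=> nu n i ni_big; rewrite (Ft_coef hr) (coef_formula_eq0 (i := i)) //; lia.
move=> C rho eps eta rho_ge1 _ eta1 nu B _.
exact: Ft_eval_bound.
Qed.
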